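(* Let $A$ be a complex semisimple Banach algebra with a unit, and suppose that $\mathrm{Soc}(A)\neq\{0\}$. Then $\mathrm{Soc}(A)$, regarded as a normed algebra with the norm of $A$, has a two-sided approximate identity. *)

From Stdlib Require Import Reals List.
Open Scope R_scope.

Record C := mkC { Cre : R; Cim : R }.
Definition C0 : C := mkC 0 0.
Definition C1 : C := mkC 1 0.
Definition Cadd (a b : C) : C := mkC (Cre a + Cre b) (Cim a + Cim b).
Definition Cmul (a b : C) : C :=
  mkC (Cre a * Cre b - Cim a * Cim b) (Cre a * Cim b + Cim a * Cre b).
Definition Cabs (a : C) : R := sqrt (Cre a ^ 2 + Cim a ^ 2).

Record BanachAlgebra := {
  car :> Type;
  ba0 : car;
  ba1 : car;
  baadd : car -> car -> car;
  baopp : car -> car;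
  bamul : car -> car -> car;
  bascal : C -> car -> car;
  banorm : car -> R;
  ba_addA : forall x y z, baadd x (baadd y z) = baadd (baadd x y) z;
  ba_addC : forall x y, baadd x y = baadd y x;
  ba_add0 : forall x, baadd ba0 x = x;
  ba_addN : forall x, baadd (baopp x) x = ba0;
  ba_scalDl : forall a b x, bascal (Cadd a b) x = baadd (bascal a x) (bascal b x);
  ba_scalDr : forall a x y, bascal a (baadd x y) = baadd (bascal a x) (bascal a y);
  ba_scalA : forall a b x, bascal (Cmul a b) x = bascal a (bascal b x);
  ba_scal1 : forall x, bascal C1 x = x;
  ba_mulA : forall x y z, bamul x (bamul y z) = bamul (bamul x y) z;
  ba_mulDl : forall x y z, bamul (baadd x y) z = baadd (bamul x z) (bamul y z);
  ba_mulDr : forall x y z, bamul x (baadd y z) = baadd (bamul x y) (bamul x z);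
  ba_scalMl : forall a x y, bascal a (bamul x y) = bamul (bascal a x) y;
  ba_scalMr : forall a x y, bascal a (bamul x y) = bamul x (bascal a y);
  ba_mul1l : forall x, bamul ba1 x = x;
  ba_mul1r : forall x, bamul x ba1 = x;
  ba_norm_eq0 : forall x, banorm x = 0 -> x = ba0;
  ba_normD : forall x y, banorm (baadd x y) <= banorm x + banorm y;
  ba_normZ : forall a x, banorm (bascal a x) = Cabs a * banorm x;
  ba_normM : forall x y, banorm (bamul x y) <= banorm x * banorm y;
  ba_complete : forall u : nat -> car,
    (forall eps, 0 < eps -> exists N, forall m n, (N <= m)%nat -> (N <= n)%nat ->
        banorm (baadd (u m) (baopp (u n))) < eps) ->
    exists l, forall eps, 0 < eps -> exists N, forall n, (N <= n)%nat ->
        banorm (baadd (u n) (baopp l)) < eps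
}.

Section Ideals.
Variable A : BanachAlgebra.

Definition left_ideal (L : A -> Prop) : Prop :=
  L (ba0 A) /\
  (forall x y, L x -> L y -> L (baadd A x y)) /\
  (forall a x, L x -> L (bascal A a x)) /\
  (forall a x, L x -> L (bamul A a x)).

Definition proper (L : A -> Prop) : Prop := ~ L (ba1 A).

Definition maximal_left_ideal (L : A -> Prop) : Prop :=
  left_ideal L /\ proper L /\
  forall J : A -> Prop, left_ideal J -> proper J ->
    (forall x, L x -> J x) -> forall x, J x -> L x.

Definition rad (x : A) : Prop :=
  forall L, maximal_left_ideal L -> L x.

Definition semisimple : Prop := forall x, rad x -> x = ba0 A.

Definition minimal_left_ideal (L : A -> Prop) : Prop :=
  left_ideal L /\ (exists x, L x /\ x <> ba0 A) /\
  forall J : A -> Prop, left_ideal J -> (forall x, J x -> L x) ->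
    (forall x, J x -> x = ba0 A) \/ (forall x, L x -> J x).

Definition soc (x : A) : Prop :=
  exists l : list A,
    Forall (fun y => exists L, minimal_left_ideal L /\ L y) l /\
    x = fold_right (baadd A) (ba0 A) l.

Definition has_two_sided_approx_identity_soc : Prop :=
  exists (I : Type) (le : I -> I -> Prop) (e : I -> A),
    inhabited I /\
    (forall i, le i i) /\
    (forall i j k, le i j -> le j k -> le i k) /\
    (forall i j, exists k, le i k /\ le j k) /\
    (forall i, soc (e i)) /\
    forall a, soc a ->
      forall eps, 0 < eps -> exists i0, forall i, le i0 i ->
        banorm A (baadd A (bamul A (e i) a) (baopp A a)) < eps /\
        banorm A (baadd A (bamul A a (e i)) (baopp A a)) < eps.

End Ideals.

(** Every finite subset of Soc(A) has an exact two-sided unit inside Soc(A),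
    so the net of these units, indexed by finite subsets ordered by inclusion,
    is a (trivially convergent) approximate identity.

    Semisimplicity makes A semiprime: z A z = 0 forces z into every maximal
    left ideal.  Hence a minimal left ideal L has the form L b z for any
    nonzero z in L, which yields a right unit of L in L and, for each z in L,
    a left unit of z in L b ⊆ Soc(A).  Units for finitely many elements are
    merged with the circle operation f ∘ e = f + e - f e, which satisfies
    1 - f ∘ e = (1 - f)(1 - e): left units of the right factor and right
    units of the left factor survive, and the other factor can be chosen to
    fix what is left over. *)

From Stdlib Require Import Reals List.
From Stdlib Require Import Classical ClassicalEpsilon.

Section SocleUnits.
Variable A : BanachAlgebra.
Local Notation "x +' y" := (baadd A x y) (at level 50, left associativity).
Local Notation "x *' y" := (bamul A x y) (at level 40, left associativity).
Local Notation "-' x" := (baopp A x) (at level 35, right associativity).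
Local Notation "x -' y" := (x +' -' y) (at level 50, left associativity).
Local Notation z0 := (ba0 A).
Local Notation u1 := (ba1 A).

Lemma addr0 x : x +' z0 = x.
Proof. rewrite ba_addC; apply ba_add0. Qed.

Lemma addrN x : x -' x = z0.
Proof. rewrite ba_addC; apply ba_addN. Qed.

Lemma addKr x y : -' x +' (x +' y) = y.
Proof. rewrite ba_addA, ba_addN, ba_add0; reflexivity. Qed.

Lemma addrI x y z : x +' y = x +' z -> y = z.
Proof. intro H. rewrite <- (addKr x y), <- (addKr x z), H; reflexivity. Qed.

Lemma addr_idem_eq0 s : s +' s = s -> s = z0.
Proof. intro H. apply (addrI s). rewrite H, addr0; reflexivity. Qed.

Lemma mul0r x : z0 *' x = z0.
Proof. apply addr_idem_eq0. rewrite <- ba_mulDl, ba_add0; reflexivity. Qed.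

Lemma mulr0 x : x *' z0 = z0.
Proof. apply addr_idem_eq0. rewrite <- ba_mulDr, ba_add0; reflexivity. Qed.

Lemma scale0r x : bascal A C0 x = z0.
Proof.
  apply addr_idem_eq0. rewrite <- ba_scalDl. f_equal.
  unfold Cadd, C0; simpl. f_equal; ring.
Qed.

Lemma scaler0 a : bascal A a z0 = z0.
Proof. apply addr_idem_eq0. rewrite <- ba_scalDr, ba_add0; reflexivity. Qed.

Lemma oppr_eq u v : u +' v = z0 -> u = -' v.
Proof.
  intro H. rewrite <- (addr0 u), <- (addrN v), ba_addA, H, ba_add0; reflexivity.
Qed.

Lemma mulNr a b : (-' a) *' b = -' (a *' b).
Proof. apply oppr_eq. rewrite <- ba_mulDl, ba_addN, mul0r; reflexivity. Qed.

Lemma mulrN a b : a *' (-' b) = -' (a *' b).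
Proof. apply oppr_eq. rewrite <- ba_mulDr, ba_addN, mulr0; reflexivity. Qed.

Lemma mulN1r x : (-' u1) *' x = -' x.
Proof. rewrite mulNr, ba_mul1l; reflexivity. Qed.

Lemma subr0_eq a b : a -' b = z0 -> a = b.
Proof.
  intro H. rewrite <- (addr0 a), <- (ba_addN A b), ba_addA, H, ba_add0.
  reflexivity.
Qed.

Lemma addrNK a b : a +' (b -' a) = b.
Proof. rewrite (ba_addC A b), ba_addA, addrN, ba_add0; reflexivity. Qed.

Lemma addrACA a b c d : (a +' b) +' (c +' d) = (a +' c) +' (b +' d).
Proof.
  rewrite <- !ba_addA. f_equal. rewrite !ba_addA. f_equal. apply ba_addC.
Qed.

Lemma norm0 : banorm A z0 = 0.
Proof.
  rewrite <- (scale0r z0), ba_normZ.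
  unfold Cabs, C0; simpl.
  replace (0 * (0 * 1) + 0 * (0 * 1)) with 0 by ring.
  rewrite sqrt_0; ring.
Qed.

Lemma left_ideal_opp L x : left_ideal A L -> L x -> L (-' x).
Proof. intros (_&_&_&HM) Hx. rewrite <- mulN1r. apply HM, Hx. Qed.

Lemma left_ideal_sub L x y : left_ideal A L -> L x -> L y -> L (x -' y).
Proof.
  intros HL Hx Hy. pose proof HL as (_&HD&_). apply HD; [exact Hx|].
  apply left_ideal_opp; assumption.
Qed.

Lemma left_ideal_zero : left_ideal A (fun x => x = z0).
Proof.
  repeat split.
  - intros x y -> ->. apply ba_add0.
  - intros a x ->. apply scaler0.
  - intros a x ->. apply mulr0.
Qed.

Definition adjoin (M : A -> Prop) z : A -> Prop :=
  fun x => exists m c, M m /\ x = m +' c *' z.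

Lemma left_ideal_adjoin M z : left_ideal A M -> left_ideal A (adjoin M z).
Proof.
  intros (M0&MD&MZ&MM). repeat split.
  - exists z0, z0. split; [exact M0|]. rewrite mul0r, addr0; reflexivity.
  - intros x y (m1&c1&H1&->) (m2&c2&H2&->). exists (m1 +' m2), (c1 +' c2).
    split; [apply MD; assumption|]. rewrite ba_mulDl. apply addrACA.
  - intros a x (m&c&Hm&->). exists (bascal A a m), (bascal A a c).
    split; [apply MZ; exact Hm|]. rewrite ba_scalDr, ba_scalMl. reflexivity.
  - intros a x (m&c&Hm&->). exists (a *' m), (a *' c).
    split; [apply MM; exact Hm|]. rewrite ba_mulDr, ba_mulA. reflexivity.
Qed.

Definition rtrans (L : A -> Prop) c : A -> Prop :=
  fun x => exists l, L l /\ x = l *' c.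

Lemma left_ideal_rtrans L c : left_ideal A L -> left_ideal A (rtrans L c).
Proof.
  intros (H0&HD&HZ&HM). repeat split.
  - exists z0. split; [exact H0|]. rewrite mul0r; reflexivity.
  - intros x y (l1&H1&->) (l2&H2&->). exists (l1 +' l2).
    split; [apply HD; assumption|]. rewrite ba_mulDl; reflexivity.
  - intros a x (l&Hl&->). exists (bascal A a l).
    split; [apply HZ; exact Hl|]. apply ba_scalMl.
  - intros a x (l&Hl&->). exists (a *' l).
    split; [apply HM; exact Hl|]. apply ba_mulA.
Qed.

Lemma rtrans_sub L c : left_ideal A L -> L c -> forall x, rtrans L c x -> L x.
Proof. intros (_&_&_&HM) Hc x (l&Hl&->). apply HM, Hc. Qed.

Definition rpreim (L : A -> Prop) c (J : A -> Prop) : A -> Prop :=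
  fun x => L x /\ J (x *' c).

Lemma left_ideal_rpreim L c J :
  left_ideal A L -> left_ideal A J -> left_ideal A (rpreim L c J).
Proof.
  intros (L0&LD&LZ&LM) (J0&JD&JZ&JM). split; [|split; [|split]].
  - split; [exact L0|]. rewrite mul0r; exact J0.
  - intros x y [Lx Jx] [Ly Jy]. split; [apply LD; assumption|].
    rewrite ba_mulDl. apply JD; assumption.
  - intros a x [Lx Jx]. split; [apply LZ, Lx|].
    rewrite <- ba_scalMl. apply JZ, Jx.
  - intros a x [Lx Jx]. split; [apply LM, Lx|].
    rewrite <- ba_mulA. apply JM, Jx.
Qed.

Lemma minimal_left_ideal_rtrans L c :
  minimal_left_ideal A L -> (exists l, L l /\ l *' c <> z0) ->
  minimal_left_ideal A (rtrans L c).
Proof.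
  intros (HL & _ & Hmin) (l&Hl&Hlc).
  split; [apply left_ideal_rtrans, HL|]. split.
  - exists (l *' c). split; [exists l; split; [exact Hl|reflexivity]|exact Hlc].
  - intros J HJ HJsub.
    destruct (Hmin (rpreim L c J) (left_ideal_rpreim L c J HL HJ)
                   (fun x Hx => proj1 Hx)) as [Hpre0|Hpre_all].
    + left. intros x Hx. destruct (HJsub x Hx) as (l'&Hl'&->).
      rewrite (Hpre0 l'); [apply mul0r|]. split; [exact Hl'|exact Hx].
    + right. intros x (l'&Hl'&->). exact (proj2 (Hpre_all l' Hl')).
Qed.

Lemma sandwich_eq0_rad z : (forall b, z *' b *' z = z0) -> rad A z.
Proof.
  intros Hzbz M (HM & HMp & HMmax).
  apply NNPP. intro HMz.
  pose proof HM as (M0&_&_&MM).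
  destruct (classic (adjoin M z u1)) as [(m&c&Hm&Hmc)|HJ1].
  - (* [m = 1 - c z] is invertible, with inverse [1 + c z], since [(c z)^2 = 0]. *)
    assert (Hm_eq : m = u1 -' c *' z).
    { rewrite Hmc, <- ba_addA, addrN, addr0. reflexivity. }
    apply HMp. replace u1 with ((u1 +' c *' z) *' m) by
      (rewrite Hm_eq, ba_mulDr, ba_mul1r, mulrN, ba_mulDl, ba_mul1l,
         <- (ba_mulA A c z (c *' z)), (ba_mulA A z c z), Hzbz, mulr0, addr0,
         <- ba_addA, addrN, addr0; reflexivity).
    apply MM; exact Hm.
  - apply HMz. apply (HMmax (adjoin M z) (left_ideal_adjoin M z HM) HJ1).
    + intros x Hx. exists x, z0. split; [exact Hx|].
      rewrite mul0r, addr0; reflexivity.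
    + exists z0, u1. split; [exact M0|]. rewrite ba_mul1l, ba_add0; reflexivity.
Qed.

Hypothesis ss : semisimple A.

Lemma semisimple_semiprime z : z <> z0 -> exists b, z *' b *' z <> z0.
Proof.
  intro Hz. apply not_all_not_ex. intro Hall.
  apply Hz, ss, sandwich_eq0_rad. intro b. apply NNPP, Hall.
Qed.

Lemma minimal_left_ideal_cyclic L z :
  minimal_left_ideal A L -> L z -> z <> z0 ->
  exists b, z *' b *' z <> z0 /\
    forall x, L x -> exists t, L t /\ x = t *' (b *' z).
Proof.
  intros (HL & _ & Hmin) Hz Hz0.
  destruct (semisimple_semiprime z Hz0) as [b Hb].
  exists b. split; [exact Hb|].
  pose proof HL as (_&_&_&HM).
  destruct (Hmin (rtrans L (b *' z)) (left_ideal_rtrans L _ HL)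
                 (rtrans_sub L _ HL (HM b z Hz))) as [Hzero|Hfull].
  - exfalso. apply Hb, Hzero. exists z. split; [exact Hz|].
    rewrite ba_mulA; reflexivity.
  - exact Hfull.
Qed.

Lemma minimal_left_ideal_right_unit L :
  minimal_left_ideal A L -> exists e, L e /\ forall l, L l -> l *' e = l.
Proof.
  intros Hmin. pose proof Hmin as (HL & (z&Hz&Hz0) & Hm).
  pose proof HL as (_&_&_&HM).
  destruct (minimal_left_ideal_cyclic L z Hmin Hz Hz0) as (b&Hb&Hcyc).
  assert (Hbz : L (b *' z)) by (apply HM; exact Hz).
  destruct (Hcyc _ Hbz) as (e&He&Hebz).
  exists e. split; [exact He|]. intros l Hl.
  set (N := rpreim L (b *' z) (fun x => x = z0)).
  destruct (Hm N (left_ideal_rpreim L _ _ HL left_ideal_zero)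
                 (fun x H => proj1 H)) as [HN0|HNall].
  - apply subr0_eq, HN0. split.
    + apply left_ideal_sub; [exact HL|apply HM; exact He|exact Hl].
    + rewrite ba_mulDl, mulNr, <- ba_mulA, <- Hebz. apply addrN.
  - exfalso. apply Hb. rewrite <- ba_mulA. exact (proj2 (HNall z Hz)).
Qed.

Lemma soc0 : soc A z0.
Proof. exists nil. split; [constructor|reflexivity]. Qed.

Lemma soc_minimal L x : minimal_left_ideal A L -> L x -> soc A x.
Proof.
  intros HL Hx. exists (x :: nil). split.
  - constructor; [exists L; split; assumption|constructor].
  - simpl. symmetry; apply addr0.
Qed.

Lemma socD x y : soc A x -> soc A y -> soc A (x +' y).
Proof.
  intros (l1&H1&->) (l2&H2&->). exists (l1 ++ l2). split.
  - apply Forall_app; split; assumption.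
  - clear H1 H2. induction l1 as [|y l IH]; simpl.
    + apply ba_add0.
    + rewrite <- IH, ba_addA; reflexivity.
Qed.

Lemma socMl a x : soc A x -> soc A (a *' x).
Proof.
  intros (l&Hl&->). exists (map (bamul A a) l). split.
  - induction Hl as [|y l' [L [HL Hy]] Hl' IH]; simpl; constructor; auto.
    exists L. split; [exact HL|]. destruct HL as ((_&_&_&HM)&_). apply HM, Hy.
  - clear Hl. induction l as [|y l' IH]; simpl.
    + apply mulr0.
    + rewrite ba_mulDr, IH. reflexivity.
Qed.

Lemma socN x : soc A x -> soc A (-' x).
Proof. intro H. rewrite <- mulN1r. apply socMl, H. Qed.

Lemma soc_ind (Q : A -> Prop) : Q z0 ->
  (forall L y x, minimal_left_ideal A L -> L y -> Q x -> Q (y +' x)) ->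
  forall x, soc A x -> Q x.
Proof.
  intros H0 HS x (l&Hl&->).
  induction Hl as [|y l [L [HL Hy]] _ IH]; simpl; [exact H0|].
  exact (HS L y _ HL Hy IH).
Qed.

Lemma minimal_left_ideal_left_unit L y :
  minimal_left_ideal A L -> L y -> exists e, soc A e /\ e *' y = y.
Proof.
  intros Hmin Hy. destruct (classic (y = z0)) as [->|Hy0].
  { exists z0. split; [exact soc0|apply mul0r]. }
  destruct (minimal_left_ideal_cyclic L y Hmin Hy Hy0) as (b&Hb&Hcyc).
  destruct (Hcyc y Hy) as (t&Ht&Hty).
  exists (t *' b). split.
  - apply (soc_minimal (rtrans L b)).
    + apply minimal_left_ideal_rtrans; [exact Hmin|].
      exists t. split; [exact Ht|]. intro Htb. apply Hy0.
      rewrite Hty, ba_mulA, Htb, mul0r; reflexivity.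
    + exists t. split; [exact Ht|reflexivity].
  - rewrite <- ba_mulA. symmetry; exact Hty.
Qed.

Definition circ f e := f +' (e -' f *' e).

Lemma soc_circ f e : soc A f -> soc A e -> soc A (circ f e).
Proof.
  intros Hf He. apply socD; [exact Hf|]. apply socD; [exact He|].
  apply socN, socMl, He.
Qed.

Lemma circ_fixl f e x :
  f *' (x -' e *' x) = x -' e *' x -> circ f e *' x = x.
Proof.
  intro H. rewrite ba_mulDr, mulrN, ba_mulA in H.
  unfold circ. rewrite !ba_mulDl, mulNr, (ba_addC A (e *' x)), ba_addA, H.
  rewrite <- ba_addA, ba_addN. apply addr0.
Qed.

Lemma circ_fixr f e x :
  (x -' x *' f) *' e = x -' x *' f -> x *' circ f e = x.
Proof.
  intro H. rewrite ba_mulDl, mulNr in H.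
  unfold circ. rewrite !ba_mulDr, mulrN, ba_mulA, H. apply addrNK.
Qed.

Lemma left_unit_extend L y f : minimal_left_ideal A L -> L y -> soc A f ->
  exists g, soc A g /\ g *' y = y /\ forall x, f *' x = x -> g *' x = x.
Proof.
  intros Hmin Hy Hf. pose proof Hmin as (HL&_&_). pose proof HL as (_&_&_&HM).
  destruct (minimal_left_ideal_left_unit L (y -' f *' y) Hmin)
    as (e&He&Hey).
  { apply left_ideal_sub; [exact HL|exact Hy|apply HM; exact Hy]. }
  exists (circ e f). split; [apply soc_circ; assumption|]. split.
  - apply circ_fixl, Hey.
  - intros x Hx. apply circ_fixl. rewrite Hx, addrN. apply mulr0.
Qed.

Lemma right_unit_extend L y f : minimal_left_ideal A L -> L y -> soc A f ->
  exists g, soc A g /\ y *' g = y /\ forall x, x *' f = x -> x *' g = x.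
Proof.
  intros Hmin Hy Hf.
  assert (Hfix : forall g, (y -' y *' f) *' g = y -' y *' f -> y *' circ f g = y)
    by (intro g; apply circ_fixr).
  assert (Hkeep : forall g x, x *' f = x -> x *' circ f g = x).
  { intros g x Hx. apply circ_fixr. rewrite Hx, addrN. apply mul0r. }
  assert (Hy1f : y -' y *' f = y *' (u1 -' f))
    by (rewrite ba_mulDr, ba_mul1r, mulrN; reflexivity).
  destruct (classic (y *' (u1 -' f) = z0)) as [Hy0|Hy0].
  - exists (circ f z0). split; [apply soc_circ; [exact Hf|exact soc0]|].
    split; [|apply Hkeep]. apply Hfix. rewrite Hy1f, Hy0, mul0r; reflexivity.
  - assert (Hmin' : minimal_left_ideal A (rtrans L (u1 -' f))).
    { apply minimal_left_ideal_rtrans; [exact Hmin|]. exists y; split; assumption. }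
    destruct (minimal_left_ideal_right_unit _ Hmin') as (e&He&Hunit).
    exists (circ f e). split.
    + apply soc_circ; [exact Hf|]. exact (soc_minimal _ _ Hmin' He).
    + split; [|apply Hkeep]. apply Hfix. rewrite Hy1f. apply Hunit.
      exists y. split; [exact Hy|reflexivity].
Qed.

Section FiniteUnits.
Variable fixes : A -> A -> Prop.
Hypothesis fixes0 : forall g, fixes g z0.
Hypothesis fixesD : forall g x y, fixes g x -> fixes g y -> fixes g (x +' y).
Hypothesis fixes_extend : forall L y f,
  minimal_left_ideal A L -> L y -> soc A f ->
  exists g, soc A g /\ fixes g y /\ forall x, fixes f x -> fixes g x.

Lemma soc_fixes_extend a : soc A a -> forall f, soc A f ->
  exists g, soc A g /\ fixes g a /\ forall x, fixes f x -> fixes g x.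
Proof.
  revert a. apply (soc_ind (fun a => forall f, soc A f ->
    exists g, soc A g /\ fixes g a /\ forall x, fixes f x -> fixes g x)).
  - intros f Hf. exists f. split; [exact Hf|]. split; [apply fixes0|auto].
  - intros L y x HL Hy IH f Hf.
    destruct (IH f Hf) as (g'&Hg'&Hg'x&Hg'f).
    destruct (fixes_extend L y g' HL Hy Hg') as (g&Hg&Hgy&Hgg').
    exists g. split; [exact Hg|]. split; [apply fixesD; auto|auto].
Qed.

Lemma soc_fixes_list (X : list A) :
  exists f, soc A f /\ forall a, In a X -> soc A a -> fixes f a.
Proof.
  induction X as [|a X (f&Hf&IH)].
  - exists z0. split; [exact soc0|intros a []].
  - destruct (classic (soc A a)) as [Ha|Ha].
    + destruct (soc_fixes_extend a Ha f Hf) as (g&Hg&Hga&Hgf).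
      exists g. split; [exact Hg|]. intros b [<-|Hb] Hsb; auto.
    + exists f. split; [exact Hf|]. intros b [<-|Hb] Hsb; [contradiction|auto].
Qed.

End FiniteUnits.

Lemma soc_unit_list (X : list A) : exists f, soc A f /\
  forall a, In a X -> soc A a -> f *' a = a /\ a *' f = a.
Proof.
  destruct (soc_fixes_list (fun g x => g *' x = x)) with (X := X)
    as (fl&Hfl&Hl).
  - apply mulr0.
  - intros g x y Hx Hy. rewrite ba_mulDr, Hx, Hy; reflexivity.
  - exact left_unit_extend.
  - destruct (soc_fixes_list (fun g x => x *' g = x)) with (X := X)
      as (fr&Hfr&Hr).
    + apply mul0r.
    + intros g x y Hx Hy. rewrite ba_mulDl, Hx, Hy; reflexivity.
    + exact right_unit_extend.
    + exists (circ fr fl). split; [apply soc_circ; assumption|].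
      intros a Ha Hsa. split.
      * apply circ_fixl. rewrite (Hl a Ha Hsa), addrN. apply mulr0.
      * apply circ_fixr. rewrite (Hr a Ha Hsa), addrN. apply mul0r.
Qed.

End SocleUnits.

Theorem theorem1p7 (A : BanachAlgebra) :
  semisimple A ->
  (exists x, soc A x /\ x <> ba0 A) ->
  has_two_sided_approx_identity_soc A.
Proof.
  intros ss _.
  assert (unit : forall X : list A, {f | soc A f /\ forall a, In a X ->
     soc A a -> bamul A f a = a /\ bamul A a f = a})
    by (intro X; apply constructive_indefinite_description, soc_unit_list, ss).
  exists (list A), (@incl A), (fun X => proj1_sig (unit X)).
  split; [exact (inhabits nil)|].
  split; [exact (@incl_refl A)|].
  split; [exact (@incl_tran A)|].
  split; [intros i j; exists (i ++ j); split; [apply incl_appl | apply incl_appr];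
          apply incl_refl|].
  split; [intro X; exact (proj1 (proj2_sig (unit X)))|].
  intros a Ha eps Heps. exists (a :: nil). intros X HX.
  destruct (proj2 (proj2_sig (unit X)) a (HX a (or_introl eq_refl)) Ha)
    as [-> ->].
  rewrite addrN, norm0. split; assumption.
Qed.
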